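(* Let $A$ be a complex evolution algebra which is not a non-zero trivial evolution algebra, with natural basis $B=\{e_i:i\in\Lambda\}$ and $e_j^2=\sum_i\omega_{ij}e_i$. Let $0\neq a=\sum_{i\in\Lambda_a}\alpha_ie_i\in A$, and set $B^0(a)=\{e_i:i\in\Lambda_a\}$ and $B^1(a)=\bigcup_{i\in\Lambda_a}\{e_j:\omega_{ji}\neq0\}$. Enumerate so that $B^0(a)=\{e_1,\dots,e_k\}$ and $B^0(a)\cup B^1(a)=\{e_1,\dots,e_k,e_{k+1},\dots,e_m\}$, and put $\alpha_{k+1}=\dots=\alpha_m=0$, $W_m=(\omega_{ij})_{i,j=1}^m$, $D=\mathrm{diag}(\alpha_1,\dots,\alpha_m)$. Then for $\lambda\in\mathbb{C}$: (i) $\lambda\in\sigma^A_m(a)$ if and only if $\lambda=0$ or $\lambda$ is an eigenvalue of $W_mD$; (ii) $\lambda\in\sigma^A(a)$ if and only if $\lambda=0$ or the system $(W_mD-\lambda I_m)\beta=(\alpha_1,\dots,\alpha_m)^T$ has no solution $\beta\in\mathbb{C}^m$ (in which case $\lambda\in\sigma^A_m(a)$).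
   Context: An evolution algebra is an algebra with a basis $\{e_i:i\in\Lambda\}$ (natural basis) with $e_ie_j=0$ for $i\neq j$; each $e_j^2$ has finitely many nonzero coefficients. A non-zero trivial evolution algebra has a natural basis with $e_i^2=\omega_{ii}e_i$, $\omega_{ii}\neq0$ for all $i$. Support $\Lambda_a=\{i:\alpha_i\neq0\}$. For a complex algebra $A$: if $A$ has a unit $e$ put $\tilde A=A$, else $\tilde A=A\oplus\mathbb{C}\mathbf1$ is the unitization with product $(a+\lambda\mathbf1)(b+\mu\mathbf1)=ab+\lambda b+\mu a+\lambda\mu\mathbf1$ and $e=\mathbf1$. $x\in\tilde A$ is invertible if it has a left and a right inverse, and m-invertible if $L_x(y)=xy$ and $R_x(y)=yx$ are bijective on $\tilde A$. $\sigma^A(a)=\{\lambda:a-\lambda e\text{ not invertible in }\tilde A\}$ and $\sigma^A_m(a)=\{\lambda:a-\lambda e\text{ not m-invertible in }\tilde A\}$. *)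

From HB Require Import structures.
From mathcomp Require Import all_boot all_order all_algebra.
Set Implicit Arguments. Unset Strict Implicit. Unset Printing Implicit Defensive.
Import Order.TTheory GRing.Theory Num.Theory.
Local Open Scope ring_scope.

Section EvolutionAlgebras.
Variables (F : numClosedFieldType) (A : lmodType F).

Definition bilinear_prod (mul : A -> A -> A) : Prop :=
  (forall (c : F) (x y z : A), mul (c *: x + y) z = c *: mul x z + mul y z) /\
  (forall (c : F) (x y z : A), mul z (c *: x + y) = c *: mul z x + mul z y).

Definition natural_basis (mul : A -> A -> A) (I : eqType) (e : I -> A)
    (coord : A -> I -> F) : Prop :=
  [/\ (forall (c : F) (x y : A) (i : I),
         coord (c *: x + y) i = c * coord x i + coord y i),
      (forall i j : I, coord (e j) i = (i == j)%:R),
      (forall x : A, exists s : seq I,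
         [/\ uniq s, (forall i, coord x i != 0 -> i \in s)
           & x = \sum_(i <- s) coord x i *: e i])
    & (forall i j : I, i != j -> mul (e i) (e j) = 0)].

Definition nonzero_trivial_evolution (mul : A -> A -> A) : Prop :=
  (exists x : A, x != 0) /\
  exists (I : eqType) (e : I -> A) (coord : A -> I -> F),
    natural_basis mul e coord /\
    forall i : I, exists w : F, w != 0 /\ mul (e i) (e i) = w *: e i.

Definition is_unit_of (T : Type) (mul : T -> T -> T) (u : T) : Prop :=
  forall x, mul u x = x /\ mul x u = x.

Definition invertible_in (T : Type) (mul : T -> T -> T) (u x : T) : Prop :=
  (exists y, mul y x = u) /\ (exists z, mul x z = u).

Definition m_invertible_in (T : Type) (mul : T -> T -> T) (x : T) : Prop :=
  bijective (mul x) /\ bijective (fun y => mul y x).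

Definition unitz_mul (mul : A -> A -> A) (x y : A * F) : A * F :=
  (mul x.1 y.1 + x.2 *: y.1 + y.2 *: x.1, x.2 * y.2).

(* lam \in sigma^A(a): if A has a unit u, a - lam u is not invertible in A;
   otherwise a - lam 1 = (a, -lam) is not invertible in the unitization. *)
Definition spectrum (mul : A -> A -> A) (a : A) (lam : F) : Prop :=
  (exists u, is_unit_of mul u /\ ~ invertible_in mul u (a - lam *: u)) \/
  ((forall u, ~ is_unit_of mul u) /\
   ~ invertible_in (unitz_mul mul) (0, 1) (a, - lam)).

Definition m_spectrum (mul : A -> A -> A) (a : A) (lam : F) : Prop :=
  (exists u, is_unit_of mul u /\ ~ m_invertible_in mul (a - lam *: u)) \/
  ((forall u, ~ is_unit_of mul u) /\
   ~ m_invertible_in (unitz_mul mul) (a, - lam)).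

Definition Wmat (mul : A -> A -> A) (I : eqType) (e : I -> A)
    (coord : A -> I -> F) (m : nat) (idx : 'I_m -> I) : 'M[F]_m :=
  \matrix_(i, j) coord (mul (e (idx j)) (e (idx j))) (idx i).

Definition Dmat (I : eqType) (coord : A -> I -> F) (a : A) (m : nat)
    (idx : 'I_m -> I) : 'M[F]_m :=
  diag_mx (\row_j coord a (idx j)).

Definition alpha_col (I : eqType) (coord : A -> I -> F) (a : A) (m : nat)
    (idx : 'I_m -> I) : 'cV[F]_m :=
  \col_i coord a (idx i).

End EvolutionAlgebras.

(* An evolution algebra with a unit is trivial, so both spectra are computed in
   the unitization, where (a, -lam) (y, t) = (a y - lam y + t a, -lam t).  For
   lam = 0 the second component can never be 1, so 0 lies in both spectra.
   For lam <> 0 the map y |-> a y - lam y acts on the coordinates indexed by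
   B^0(a) \cup B^1(a) as the matrix W_m D - lam I and on all other coordinates
   as multiplication by -lam; hence it is bijective iff W_m D - lam I is
   invertible, and (0, 1) lies in its image iff (W_m D - lam I) beta = alpha
   is solvable. *)
From HB Require Import structures.
From mathcomp Require Import all_boot all_order all_algebra.
From mathcomp Require Import ring.
Import Order.TTheory GRing.Theory Num.Theory.
Local Open Scope ring_scope.
Set Implicit Arguments. Unset Strict Implicit.

Lemma eq_big_uniq_support (I : eqType) (V : nmodType) (f : I -> V)
    (s1 s2 : seq I) :
  uniq s1 -> uniq s2 -> (forall i, f i != 0 -> (i \in s1) && (i \in s2)) ->
  \sum_(i <- s1) f i = \sum_(i <- s2) f i.
Proof.
move=> s1_uniq s2_uniq supp_f.
have out0 (s s' : seq I) : \sum_(i <- s | i \notin s') f i = 0 ->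
    \sum_(i <- s) f i = \sum_(i <- s | i \in s') f i.
  by move=> h; rewrite (bigID (mem s')) /= h addr0.
rewrite (out0 s1 s2) ?[RHS](out0 s2 s1); last 2 first.
- apply: big1 => i /negbTE i_out; apply: contraFeq _ i_out.
  by move/supp_f/andP => [].
- apply: big1 => i /negbTE i_out; apply: contraFeq _ i_out.
  by move/supp_f/andP => [].
rewrite -[LHS]big_filter -[RHS]big_filter; apply: perm_big.
apply: uniq_perm; rewrite ?filter_uniq // => i.
by rewrite !mem_filter andbC.
Qed.

Lemma eigenvalue_unitmx (F : fieldType) n (g : 'M[F]_n) lam :
  eigenvalue g lam = (g - lam%:M \notin unitmx).
Proof. by rewrite /eigenvalue /eigenspace kermx_eq0 row_free_unit. Qed.

Lemma unitmx_ker_col (F : fieldType) n (N : 'M[F]_n) :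
  (forall b : 'cV_n, N *m b = 0 -> b = 0) -> N \in unitmx.
Proof.
move=> N_inj; rewrite -unitmx_tr -row_free_unit; apply: inj_row_free => v vN0.
have /N_inj/(congr1 trmx) : N *m v^T = 0.
  by rewrite -[N]trmxK -trmx_mul vN0 trmx0.
by rewrite trmxK trmx0.
Qed.

Section Unitization.
Variables (F : numClosedFieldType) (A : lmodType F) (mul : A -> A -> A).

Lemma m_invertible_invertible (T : Type) (mulT : T -> T -> T) u x :
  m_invertible_in mulT x -> invertible_in mulT u x.
Proof. by case=> [[g _ gK] [h _ hK]]; split; [exists (h u) | exists (g u)]. Qed.

Lemma spectrum_m_spectrum a lam : spectrum mul a lam -> m_spectrum mul a lam.
Proof.
case=> [[u [u_unit not_inv]] | [no_unit not_inv]]; [left; exists u | right];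
  by split=> // minv; apply/not_inv/m_invertible_invertible.
Qed.

Hypothesis no_unit : forall u, ~ is_unit_of mul u.

Lemma spectrum_nonunitalE a lam :
  spectrum mul a lam <-> ~ invertible_in (unitz_mul mul) (0, 1) (a, - lam).
Proof. by split=> [[[u [/no_unit]]|[]] | not_inv]; last right. Qed.

Lemma m_spectrum_nonunitalE a lam :
  m_spectrum mul a lam <-> ~ m_invertible_in (unitz_mul mul) (a, - lam).
Proof. by split=> [[[u [/no_unit]]|[]] | not_inv]; last right. Qed.

Lemma unitz_mulC : commutative mul -> commutative (unitz_mul mul).
Proof.
move=> mulC [x1 x2] [y1 y2]; rewrite /unitz_mul /= mulC [x2 * _]mulrC.
by rewrite -!addrA [_ *: y1 + _]addrC.
Qed.

Lemma unitz_not_invertible0 a : ~ invertible_in (unitz_mul mul) (0, 1) (a, 0).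
Proof. by case=> _ [[y t] [_ /eqP]]; rewrite mul0r eq_sym oner_eq0. Qed.

End Unitization.

Section EvolutionAlgebra.
Variables (F : numClosedFieldType) (A : lmodType F) (mul : A -> A -> A).
Variables (I : eqType) (e : I -> A) (coord : A -> I -> F).
Hypotheses (mul_bilinear : bilinear_prod mul)
  (basis : natural_basis mul e coord).

Definition coordl (i : I) (x : A) : F^o := coord x i.
Fact coordl_is_linear i : linear (coordl i).
Proof. by case: basis => coord_lin _ _ _ c x y; rewrite /coordl coord_lin. Qed.
HB.instance Definition _ i :=
  GRing.isLinear.Build F A F^o *:%R (coordl i) (coordl_is_linear i).

Definition rmul (z x : A) : A := mul x z.
Fact rmul_is_linear z : linear (rmul z).
Proof. by case: mul_bilinear => mul_lin _ c x y; rewrite /rmul mul_lin. Qed.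
HB.instance Definition _ z :=
  GRing.isLinear.Build F A A *:%R (rmul z) (rmul_is_linear z).

Definition lmul (z x : A) : A := mul z x.
Fact lmul_is_linear z : linear (lmul z).
Proof. by case: mul_bilinear => _ mul_lin c x y; rewrite /lmul mul_lin. Qed.
HB.instance Definition _ z :=
  GRing.isLinear.Build F A A *:%R (lmul z) (lmul_is_linear z).

Lemma coord0 i : coord 0 i = 0.
Proof. exact: (linear0 (coordl i)). Qed.

Lemma coordD x y i : coord (x + y) i = coord x i + coord y i.
Proof. exact: (linearD (coordl i)). Qed.

Lemma coordB x y i : coord (x - y) i = coord x i - coord y i.
Proof. exact: (linearB (coordl i)). Qed.

Lemma coordZ c x i : coord (c *: x) i = c * coord x i.
Proof. by rewrite -[LHS]/(coordl i _) linearZ. Qed.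

Lemma coord_sum (J : Type) (r : seq J) (P : pred J) (G : J -> A) i :
  coord (\sum_(j <- r | P j) G j) i = \sum_(j <- r | P j) coord (G j) i.
Proof. exact: (linear_sum (coordl i)). Qed.

Lemma mulZl c x y : mul (c *: x) y = c *: mul x y.
Proof. by rewrite -[LHS]/(rmul y _) linearZ. Qed.

Lemma mulZr c x y : mul x (c *: y) = c *: mul x y.
Proof. by rewrite -[LHS]/(lmul x _) linearZ. Qed.

Lemma mul_suml (J : Type) (r : seq J) (P : pred J) (G : J -> A) y :
  mul (\sum_(j <- r | P j) G j) y = \sum_(j <- r | P j) mul (G j) y.
Proof. exact: (linear_sum (rmul y)). Qed.

Lemma mul_sumr (J : Type) (r : seq J) (P : pred J) (G : J -> A) x :
  mul x (\sum_(j <- r | P j) G j) = \sum_(j <- r | P j) mul x (G j).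
Proof. exact: (linear_sum (lmul x)). Qed.

Lemma coord_basis i j : coord (e j) i = (i == j)%:R.
Proof. by case: basis. Qed.

Lemma coord_expansion x : exists s : seq I,
  [/\ uniq s, (forall i, coord x i != 0 -> i \in s)
    & x = \sum_(i <- s) coord x i *: e i].
Proof. by case: basis. Qed.

Lemma coord_inj x y : (forall i, coord x i = coord y i) -> x = y.
Proof.
move=> eq_xy; apply/eqP; rewrite -subr_eq0; apply/eqP.
have [s [_ _ ->]] := coord_expansion (x - y).
by rewrite big1 // => i _; rewrite coordB eq_xy subrr scale0r.
Qed.

Lemma mul_basisl i y : mul (e i) y = coord y i *: mul (e i) (e i).
Proof.
have [t [t_uniq supp_y ->]] := coord_expansion y.
rewrite mul_sumr coord_sum scaler_suml; apply: eq_bigr => j _.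
rewrite mulZr coordZ coord_basis -scalerA.
have [->|ij] := eqVneq i j; first by rewrite scale1r.
have [_ _ _ mul_orth] := basis.
by rewrite scale0r mul_orth // scaler0.
Qed.

Lemma mul_expansion x y s : uniq s -> (forall i, coord x i != 0 -> i \in s) ->
  mul x y = \sum_(i <- s) (coord x i * coord y i) *: mul (e i) (e i).
Proof.
move=> s_uniq supp_x; have [t [t_uniq supp_t ex]] := coord_expansion x.
rewrite {1}ex mul_suml.
under eq_bigr => i _ do rewrite mulZl mul_basisl scalerA.
apply: eq_big_uniq_support => // i.
have [->|xi_nz _] := eqVneq (coord x i) 0; first by rewrite mul0r scale0r eqxx.
by rewrite supp_t // supp_x.
Qed.

Lemma evolution_mulC : commutative mul.
Proof.
move=> x y; have [s [s_uniq supp_x _]] := coord_expansion x.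
have [t [t_uniq supp_y _]] := coord_expansion y.
have st_uniq : uniq (undup (s ++ t)) by apply: undup_uniq.
rewrite (mul_expansion y st_uniq) ?(mul_expansion x st_uniq)
  => [|i /supp_y|i /supp_x].
- by apply: eq_bigr => i _; rewrite mulrC.
- by rewrite mem_undup mem_cat => ->; rewrite orbT.
- by rewrite mem_undup mem_cat => ->.
Qed.

(* A unit u forces e_i = e_i u = u_i e_i^2, so every e_i^2 is a non-zero
   multiple of e_i. *)
Lemma unital_evolution_trivial u :
  (exists x : A, x != 0) -> is_unit_of mul u -> nonzero_trivial_evolution mul.
Proof.
move=> A_nz u_unit; split=> //; exists I, e, coord; split=> // i.
have [_ ei_u] := u_unit (e i); rewrite mul_basisl in ei_u.
have ui_nz : coord u i != 0.
  apply: contra_eqN (coord_basis i i) => /eqP ui0.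
  by rewrite -ei_u ui0 scale0r coord0 eqxx eq_sym oner_eq0.
exists (coord u i)^-1; split; first by rewrite invr_eq0.
by rewrite -[in RHS]ei_u scalerA mulVf // scale1r.
Qed.

Section Element.
Variables (a : A) (m : nat) (idx : 'I_m -> I).
Hypotheses (idx_inj : injective idx)
  (supp_a : forall l, coord a l != 0 -> exists j, idx j = l)
  (supp_sq : forall i l, coord a i != 0 -> coord (mul (e i) (e i)) l != 0 ->
     exists j, idx j = l).

Let M := Wmat mul e coord idx *m Dmat coord a idx.

Definition coords (y : A) : 'cV[F]_m := \col_i coord y (idx i).
Fact coords_is_linear : linear coords.
Proof.
by move=> c x y; apply/matrixP => i j; rewrite !mxE coordD coordZ.
Qed.
HB.instance Definition _ :=
  GRing.isLinear.Build F A 'cV[F]_m *:%R coords coords_is_linear.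

Definition of_coords (b : 'cV[F]_m) : A := \sum_j b j 0 *: e (idx j).

Lemma alpha_colE : alpha_col coord a idx = coords a.
Proof. by []. Qed.

Lemma coord_of_coords b i : coord (of_coords b) (idx i) = b i 0.
Proof.
rewrite coord_sum (bigD1 i) //= big1 => [|j ji].
  by rewrite addr0 coordZ coord_basis eqxx mulr1.
rewrite coordZ coord_basis (inj_eq idx_inj).
by rewrite eq_sym (negbTE ji) mulr0.
Qed.

Lemma coord_of_coords_out b l :
  (forall j, idx j != l) -> coord (of_coords b) l = 0.
Proof.
move=> l_out; rewrite coord_sum big1 // => j _.
by rewrite coordZ coord_basis eq_sym (negbTE (l_out j)) mulr0.
Qed.

Lemma of_coordsK : cancel of_coords coords.
Proof. by move=> b; apply/matrixP => i j; rewrite mxE coord_of_coords ord1. Qed.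

Lemma coord_out_inj x y : coords x = coords y ->
    (forall l, (forall j, idx j != l) -> coord x l = coord y l) -> x = y.
Proof.
move=> eq_in eq_out; apply: coord_inj => l.
case: (boolP [exists j, idx j == l]) => [/existsP[j /eqP <-] | /existsPn l_out].
  by have /matrixP/(_ j 0) := eq_in; rewrite !mxE.
by apply: eq_out => j; apply: l_out.
Qed.

Lemma coord_a_out l : (forall j, idx j != l) -> coord a l = 0.
Proof.
move=> l_out; apply/eqP; apply: contraT => /supp_a[j jl].
by move: (l_out j); rewrite jl eqxx.
Qed.

Lemma mul_aE y : mul a y =
  \sum_j (coord a (idx j) * coord y (idx j)) *: mul (e (idx j)) (e (idx j)).
Proof.
rewrite (mul_expansion (x := a) y (s := [seq idx j | j <- enum 'I_m])).
- by rewrite big_map big_enum.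
- by rewrite map_inj_uniq // enum_uniq.
- by move=> l /supp_a[j <-]; rewrite map_f ?mem_enum.
Qed.

Lemma coord_mul_a y i : coord (mul a y) (idx i) = (M *m coords y) i 0.
Proof.
rewrite mul_aE coord_sum mxE; apply: eq_bigr => j _.
by rewrite coordZ /M /Dmat mul_mx_diag !mxE; ring.
Qed.

Lemma coord_mul_a_out y l : (forall j, idx j != l) -> coord (mul a y) l = 0.
Proof.
move=> l_out; rewrite mul_aE coord_sum big1 // => j _; rewrite coordZ.
have [->|aj_nz] := eqVneq (coord a (idx j)) 0; first by rewrite !mul0r.
have [->|sq_nz] := eqVneq (coord (mul (e (idx j)) (e (idx j))) l) 0.
  by rewrite mulr0.
by have [j' j'l] := supp_sq aj_nz sq_nz; move: (l_out j'); rewrite j'l eqxx.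
Qed.

Definition shift (lam : F) (y : A) : A := mul a y - lam *: y.

Lemma coords_shift lam y : coords (shift lam y) = (M - lam%:M) *m coords y.
Proof.
apply/matrixP => i j; rewrite ord1 mulmxBl mul_scalar_mx [LHS]mxE.
by rewrite coordB coordZ coord_mul_a !mxE.
Qed.

Lemma coord_shift_out lam y l :
  (forall j, idx j != l) -> coord (shift lam y) l = - lam * coord y l.
Proof.
by move=> l_out; rewrite coordB coordZ coord_mul_a_out // sub0r mulNr.
Qed.

Lemma shiftZ lam c y : shift lam (c *: y) = c *: shift lam y.
Proof. by rewrite /shift mulZr scalerBr !scalerA mulrC. Qed.

Lemma shift_of_coords lam b :
  (M - lam%:M) *m b = coords a -> shift lam (of_coords b) = a.
Proof.
move=> Nb; apply: coord_out_inj => [|l l_out].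
  by rewrite coords_shift of_coordsK.
by rewrite coord_shift_out // coord_of_coords_out // coord_a_out // mulr0.
Qed.

Lemma shift_of_coords_ker lam b :
  (M - lam%:M) *m b = 0 -> shift lam (of_coords b) = shift lam 0.
Proof.
move=> Nb; apply: coord_out_inj => [|l l_out].
  by rewrite !coords_shift of_coordsK Nb linear0 mulmx0.
by rewrite !coord_shift_out // coord_of_coords_out // coord0.
Qed.

Lemma unitz_mul_a lam y t :
  unitz_mul mul (a, - lam) (y, t) = (shift lam y + t *: a, - lam * t).
Proof. by rewrite /unitz_mul /shift /= scaleNr. Qed.

Section NonzeroScalar.
Variables (lam : F).
Hypothesis lam_nz : lam != 0.

Let N := M - lam%:M.

Lemma shift_inj : N \in unitmx -> injective (shift lam).
Proof.
move=> N_unit y y' eq_shift; apply: coord_out_inj => [|l l_out].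
  rewrite -[coords y](mulKmx N_unit) -[coords y'](mulKmx N_unit).
  by rewrite -!coords_shift eq_shift.
have := congr1 (coord^~ l) eq_shift; rewrite /= !coord_shift_out //.
by apply: mulfI; rewrite oppr_eq0.
Qed.

(* Off the idx-coordinates shift acts as -lam, so its inverse is -c/lam there;
   the second summand corrects the idx-coordinates. *)
Definition shift_inv (c : A) : A :=
  - lam^-1 *: c + of_coords (invmx N *m (lam^-1 *: (M *m coords c))).

Lemma shift_invK : N \in unitmx -> cancel shift_inv (shift lam).
Proof.
move=> N_unit c; apply: coord_out_inj => [|l l_out].
  rewrite coords_shift /shift_inv linearD linearZ /= of_coordsK.
  rewrite mulmxDr mulKVmx // -scalemxAr /N mulmxBl mul_scalar_mx.
  by apply/matrixP => i j; rewrite !mxE; field.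
rewrite coord_shift_out // /shift_inv coordD coordZ coord_of_coords_out //.
by rewrite addr0; field.
Qed.

Lemma m_invertible_unitzE :
  m_invertible_in (unitz_mul mul) (a, - lam) <-> N \in unitmx.
Proof.
split=> [[[g fK _] _] | N_unit].
  apply: unitmx_ker_col => b /shift_of_coords_ker shift_b.
  have f_eq : unitz_mul mul (a, - lam) (of_coords b, 0) =
              unitz_mul mul (a, - lam) (0, 0) by rewrite !unitz_mul_a shift_b.
  move/(congr1 g): f_eq; rewrite !fK => -[b0].
  by rewrite -[b]of_coordsK b0 linear0.
pose g z := (shift_inv (z.1 - (- lam^-1 * z.2) *: a), - lam^-1 * z.2).
have gK : cancel g (unitz_mul mul (a, - lam)).
  move=> [x t]; rewrite unitz_mul_a shift_invK // subrK /=.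
  by congr pair; field.
have f_inj : injective (unitz_mul mul (a, - lam)).
  move=> [y t] [y' t']; rewrite !unitz_mul_a => -[eq1 /mulfI eq2].
  have tt' : t = t' by apply: eq2; rewrite oppr_eq0.
  by rewrite tt' in eq1 *; rewrite (shift_inj N_unit (addIr _ eq1)).
have f_bij : bijective (unitz_mul mul (a, - lam)).
  by exists g => //; apply: inj_can_sym.
split; first exact: f_bij.
by have := eq_bij f_bij (unitz_mulC evolution_mulC (a, - lam)).
Qed.

Lemma invertible_unitzE :
  invertible_in (unitz_mul mul) (0, 1) (a, - lam) <->
  exists b, N *m b = alpha_col coord a idx.
Proof.
rewrite alpha_colE; split=> [[_ [[y t]]] | [b Nb]].
  rewrite unitz_mul_a => -[/eqP shift_y lam_t].
  exists (lam *: coords y); rewrite -scalemxAr -coords_shift.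
  move: shift_y; rewrite addr_eq0 => /eqP ->.
  by rewrite linearN linearZ /= scalerN scalerA -scaleNr -mulNr lam_t scale1r.
have sol : unitz_mul mul (a, - lam) (lam^-1 *: of_coords b, - lam^-1) = (0, 1).
  rewrite unitz_mul_a shiftZ shift_of_coords // scaleNr subrr.
  by congr pair; field.
split; exists (lam^-1 *: of_coords b, - lam^-1) => //.
by rewrite (unitz_mulC evolution_mulC).
Qed.

End NonzeroScalar.
End Element.
End EvolutionAlgebra.

Theorem proposition5p5 (F : numClosedFieldType) (A : lmodType F)
  (mul : A -> A -> A) (Hbil : bilinear_prod mul)
  (L : eqType) (e : L -> A) (coord : A -> L -> F)
  (Hbasis : natural_basis mul e coord)
  (Hnt : ~ nonzero_trivial_evolution mul)
  (a : A) (Ha : a != 0)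
  (k m : nat) (idx : 'I_m -> L) (Hidx : injective idx) (Hkm : (k <= m)%N)
  (HB0 : forall l : L, coord a l != 0 <-> exists j : 'I_m, (j < k)%N /\ idx j = l)
  (HB01 : forall l : L,
     (coord a l != 0 \/
      exists i : L, coord a i != 0 /\ coord (mul (e i) (e i)) l != 0)
     <-> exists j : 'I_m, idx j = l) :
  forall lam : F,
    (m_spectrum mul a lam <->
       lam = 0 \/
       eigenvalue (Wmat mul e coord idx *m Dmat coord a idx) lam) /\
    (spectrum mul a lam <->
       lam = 0 \/
       ~ (exists beta : 'cV[F]_m,
            (Wmat mul e coord idx *m Dmat coord a idx - lam%:M) *m beta
              = alpha_col coord a idx)) /\
    (spectrum mul a lam -> m_spectrum mul a lam).
Proof.
move=> lam.
have no_unit u : ~ is_unit_of mul u.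
  by move/(unital_evolution_trivial Hbil Hbasis (ex_intro _ a Ha)).
have supp_a l : coord a l != 0 -> exists j, idx j = l.
  by case/HB0 => j [_ <-]; exists j.
have supp_sq i l : coord a i != 0 -> coord (mul (e i) (e i)) l != 0 ->
    exists j, idx j = l.
  by move=> ai_nz sq_nz; apply/HB01; right; exists i.
have [-> | lam_nz] := eqVneq lam 0.
  have spec0 : spectrum mul a 0.
    apply/(spectrum_nonunitalE no_unit); rewrite oppr0.
    exact: unitz_not_invertible0.
  have m_spec0 := spectrum_m_spectrum spec0.
  by do !split=> //; left.
have m_inv := m_invertible_unitzE Hbil Hbasis Hidx supp_a supp_sq lam_nz.
have inv := invertible_unitzE Hbil Hbasis Hidx supp_a supp_sq lam_nz.
split; last split; last exact: spectrum_m_spectrum.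
- rewrite eigenvalue_unitmx (m_spectrum_nonunitalE no_unit).
  split=> [not_minv | [lam0 | /negP N_sing /m_inv //]].
    by right; apply/negP => /m_inv.
  by rewrite lam0 eqxx in lam_nz.
- rewrite (spectrum_nonunitalE no_unit).
  split=> [not_inv | [lam0 | no_sol /inv //]].
    by right => /inv.
  by rewrite lam0 eqxx in lam_nz.
Qed.
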